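(* There exist finite-dimensional Hilbert spaces $\mathcal{H}_1,\mathcal{H}_2$, states $\rho_1$ on $\mathcal{H}_1$ and $\rho_2$ on $\mathcal{H}_2$, a separable observable $A$ on $\mathcal{H}_1\otimes\mathcal{H}_2$, an entangled state $\rho$ on $\mathcal{H}_1\otimes\mathcal{H}_2$, and a real number $\lambda>0$ such that: (1) $\rho$ is a witness of the $\lambda$-lifting $\rho_1\,A^\#\,\rho_2$; and (2) no separable state $\sigma$ on $\mathcal{H}_1\otimes\mathcal{H}_2$ is a witness of the $\lambda$-lifting $\rho_1\,A^\#\,\rho_2$.
   Context: $\rho\in\mathcal{D}^\le(\mathcal{H}_1\otimes\mathcal{H}_2)$ (partial density operators) is a coupling for $\langle\rho_1,\rho_2\rangle$ if $\mathrm{tr}_2(\rho)=\rho_1$ and $\mathrm{tr}_1(\rho)=\rho_2$ (partial traces). For an observable (Hermitian operator) $A$ on $\mathcal{H}_1\otimes\mathcal{H}_2$ and $\lambda>0$, $\rho$ is a witness of the $\lambda$-lifting $\rho_1 A^\#\rho_2$ if $\rho$ is a coupling for $\langle\rho_1,\rho_2\rangle$ and $\mathrm{tr}(A\rho)\ge\lambda$. A positive operator $\rho$ on $\mathcal{H}_1\otimes\mathcal{H}_2$ is separable if $\rho=\sum_m\rho_{m1}\otimes\rho_{m2}$ with each $\rho_{mi}$ a positive operator on $\mathcal{H}_i$; it is entangled if it is not separable. *)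

From HB Require Import structures.
From mathcomp Require Import all_boot all_order all_algebra.
From mathcomp Require Import complex mxtens.
From mathcomp Require Import Rstruct.
Set Implicit Arguments. Unset Strict Implicit. Unset Printing Implicit Defensive.
Import Order.TTheory GRing.Theory Num.Theory.
Local Open Scope ring_scope.

(* A d-dimensional Hilbert space is C^d; operators on it are 'M[C]_d.
   H1 (x) H2 = C^(d1*d2), with the Kronecker product tensmx (A *t B)
   and index (i,j) |-> mxtens_index (i,j). *)
Definition C : numClosedFieldType := (Rdefinitions.R)[i].

Definition RtoC (x : Rdefinitions.R) : C := Complex x 0.

Definition adjmx {m n} (A : 'M[C]_(m, n)) : 'M[C]_(n, m) := (map_mx Num.conj A)^T.

Definition is_positive {n} (A : 'M[C]_n) : Prop :=
  forall v : 'cV[C]_n, 0 <= (adjmx v *m A *m v) 0 0.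

Definition is_observable {n} (A : 'M[C]_n) : Prop := adjmx A = A.

Definition is_state {n} (rho : 'M[C]_n) : Prop := is_positive rho /\ \tr rho = 1.

Definition is_pdo {n} (rho : 'M[C]_n) : Prop := is_positive rho /\ \tr rho <= 1.

Definition ptrace2 {d1 d2} (rho : 'M[C]_(d1 * d2)) : 'M[C]_d1 :=
  \matrix_(i, j) \sum_(k < d2) rho (mxtens_index (i, k)) (mxtens_index (j, k)).
Definition ptrace1 {d1 d2} (rho : 'M[C]_(d1 * d2)) : 'M[C]_d2 :=
  \matrix_(i, j) \sum_(k < d1) rho (mxtens_index (k, i)) (mxtens_index (k, j)).

Definition is_coupling {d1 d2} (rho1 : 'M[C]_d1) (rho2 : 'M[C]_d2)
  (rho : 'M[C]_(d1 * d2)) : Prop :=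
  is_pdo rho /\ ptrace2 rho = rho1 /\ ptrace1 rho = rho2.

Definition lifting_witness {d1 d2} (lam : Rdefinitions.R) (rho1 : 'M[C]_d1)
  (A : 'M[C]_(d1 * d2)) (rho2 : 'M[C]_d2) (rho : 'M[C]_(d1 * d2)) : Prop :=
  is_coupling rho1 rho2 rho /\ RtoC lam <= \tr (A *m rho).

Definition is_separable {d1 d2} (rho : 'M[C]_(d1 * d2)) : Prop :=
  is_positive rho /\
  exists (k : nat) (f1 : 'I_k -> 'M[C]_d1) (f2 : 'I_k -> 'M[C]_d2),
    (forall m, is_positive (f1 m) /\ is_positive (f2 m)) /\
    rho = \sum_(m < k) (f1 m *t f2 m).

Definition is_entangled {d1 d2} (rho : 'M[C]_(d1 * d2)) : Prop :=
  is_positive rho /\ ~ is_separable rho.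

From HB Require Import structures.
From mathcomp Require Import all_boot all_order all_algebra.
From mathcomp Require Import complex mxtens.
From mathcomp Require Import Rstruct.
From mathcomp Require Import ring lra.
Import Order.TTheory GRing.Theory Num.Theory.
Local Open Scope ring_scope.
Local Open Scope complex_scope.

(* Take d1 = d2 = 2, the maximally mixed marginals I/2, the maximally entangled
   state rho = 1/2 sum_(a,b) |aa><bb| and the separable observable
   A = sum_m |u_m><u_m| (x) |w_m><w_m| with (u_m, w_m) ranging over
   (2e0, e0), (2e1, e1), (e0 + e1, e0 + e1), (e0 - e1, e0 - e1).
   Since tr((X (x) Y) rho) = tr(X^T Y) / 2, we get tr(A rho) = 1/2 sum_m (u_m . w_m)^2 = 8.
   For positive P, Q let a, b be the diagonal of P and g = P01 + P10, which is real,
   and a', b', g' likewise for Q. Positivity gives g^2 <= 4ab and g'^2 <= 4a'b', so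
   gg' <= 4 sqrt(aba'b') <= 2(ab' + a'b) and
     tr(A (P (x) Q)) = 4aa' + 4bb' + 2(a + b)(a' + b') + 2gg' <= 6 tr(P (x) Q).
   By linearity tr(A sigma) <= 6 < 8 for every separable state sigma: lambda = 8
   separates rho from all separable couplings, and rho itself is entangled. *)

Local Notation R := Rdefinitions.R.

Section BinaryQuadraticForms.
Context {F : realFieldType}.

Definition binary_form (a b g : F) (p : F * F) : F :=
  p.1 * p.1 * a + p.1 * p.2 * g + p.2 * p.2 * b.

Lemma binary_form_ge0_discr (a b g : F) :
  (forall p, 0 <= binary_form a b g p) -> [/\ 0 <= a, 0 <= b & g * g <= 4 * a * b].
Proof.
move=> q; have q' s t := q (s, t); rewrite /binary_form /= in q'.
have a_ge0 := q' 1 0; have b_ge0 := q' 0 1.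
have ha : 0 <= a * (4 * a * b - g * g) by have := q' (- g) (2 * a); lra.
have hb : 0 <= b * (4 * a * b - g * g) by have := q' (2 * b) (- g); lra.
split; [lra | lra |].
have [a_gt0 | a_le0] := ltrP 0 a; first by move: ha; rewrite pmulr_rge0 //; lra.
have [b_gt0 | b_le0] := ltrP 0 b; first by move: hb; rewrite pmulr_rge0 //; lra.
have := q' 1 (- g); nra.
Qed.

Lemma discr_mul_le {a b g a' b' g' : F} :
  0 <= a -> 0 <= b -> 0 <= a' -> 0 <= b' ->
  g * g <= 4 * a * b -> g' * g' <= 4 * a' * b' ->
  g * g' <= 2 * (a * b' + a' * b).
Proof.
move=> a_ge0 b_ge0 a'_ge0 b'_ge0 hg hg'.
have S_ge0 : 0 <= 2 * (a * b' + a' * b) by nra.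
have : (g * g') ^+ 2 <= (2 * (a * b' + a' * b)) ^+ 2.
  apply: (le_trans (y := (4 * a * b) * (4 * a' * b'))).
    by rewrite exprMn !expr2; apply: ler_pM; nra.
  have := sqr_ge0 (a * b' - a' * b); rewrite !expr2; lra.
nra.
Qed.

End BinaryQuadraticForms.

Lemma RtoCE (x : R) : RtoC x = x%:C.
Proof. by []. Qed.

Lemma realC (x : R) : (x%:C : C) \is Num.real.
Proof. by apply/complex_realP; exists x. Qed.

Lemma conjC_realC (x : R) : Num.conj (x%:C : C) = x%:C.
Proof. exact/conj_Creal/realC. Qed.

Lemma adjmxM m n p (X : 'M[C]_(m, n)) (Y : 'M[C]_(n, p)) :
  adjmx (X *m Y) = adjmx Y *m adjmx X.
Proof. by rewrite /adjmx map_mxM trmx_mul. Qed.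

Lemma adjmxK m n (X : 'M[C]_(m, n)) : adjmx (adjmx X) = X.
Proof. by apply/matrixP => i j; rewrite !mxE conjCK. Qed.

Lemma adjmxD m n (X Y : 'M[C]_(m, n)) : adjmx (X + Y) = adjmx X + adjmx Y.
Proof. by apply/matrixP => i j; rewrite !mxE rmorphD. Qed.

Lemma adjmx0 m n : adjmx (0 : 'M[C]_(m, n)) = 0.
Proof. by apply/matrixP => i j; rewrite !mxE rmorph0. Qed.

Lemma adjmx_sum m n k (F : 'I_k -> 'M[C]_(m, n)) :
  adjmx (\sum_(i < k) F i) = \sum_(i < k) adjmx (F i).
Proof. exact: (big_morph _ (@adjmxD m n) (adjmx0 m n)). Qed.

Lemma adjmx1 n : adjmx (1%:M : 'M[C]_n) = 1%:M.
Proof. by rewrite /adjmx map_mx1 trmx1. Qed.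

Lemma adjmx_delta m n (i : 'I_m) (j : 'I_n) :
  adjmx (delta_mx i j : 'M[C]_(m, n)) = delta_mx j i.
Proof. by rewrite /adjmx map_delta_mx trmx_delta. Qed.

Lemma adjmx_tens m n p q (X : 'M[C]_(m, n)) (Y : 'M[C]_(p, q)) :
  adjmx (X *t Y) = adjmx X *t adjmx Y.
Proof. by rewrite /adjmx map_mxT trmx_tens. Qed.

Definition ketbra {n k} (X : 'M[C]_(n, k)) : 'M[C]_n := X *m adjmx X.

Definition qform {n} (M : 'M[C]_n) (v : 'cV[C]_n) : C := (adjmx v *m M *m v) 0 0.

Lemma adjmx_ketbra n k (X : 'M[C]_(n, k)) : adjmx (ketbra X) = ketbra X.
Proof. by rewrite /ketbra adjmxM adjmxK. Qed.

Lemma ketbra_tens m n k l (X : 'M[C]_(m, k)) (Y : 'M[C]_(n, l)) :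
  ketbra X *t ketbra Y = ketbra (X *t Y).
Proof. by rewrite /ketbra adjmx_tens tensmx_mul. Qed.

Section PositiveCone.
Variable n : nat.
Implicit Types X Y : 'M[C]_n.

Lemma positive_ketbra k (Z : 'M[C]_(n, k)) : is_positive (ketbra Z).
Proof.
move=> v; set w := adjmx v *m Z.
have -> : adjmx v *m ketbra Z *m v = w *m adjmx w by rewrite adjmxM adjmxK !mulmxA.
by rewrite mxE; apply: sumr_ge0 => j _; rewrite !mxE mul_conjC_ge0.
Qed.

Lemma positiveD X Y : is_positive X -> is_positive Y -> is_positive (X + Y).
Proof. by move=> hX hY v; rewrite mulmxDr mulmxDl mxE addr_ge0 ?hX ?hY. Qed.

Lemma positive_sum k (F : 'I_k -> 'M[C]_n) :
  (forall i, is_positive (F i)) -> is_positive (\sum_(i < k) F i).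
Proof.
move=> F_pos; apply: (big_ind is_positive) => //; last exact: positiveD.
by move=> v; rewrite mulmx0 mul0mx mxE.
Qed.

Lemma positiveZ (c : C) X : 0 <= c -> is_positive X -> is_positive (c *: X).
Proof. by move=> c_ge0 hX v; rewrite -scalemxAr -scalemxAl mxE mulr_ge0 ?hX. Qed.

Lemma state_pdo X : is_state X -> is_pdo X.
Proof. by case=> X_pos trX; split; rewrite ?trX. Qed.

End PositiveCone.

Lemma mxtrace_tens (K : pzRingType) m n (X : 'M[K]_m) (Y : 'M[K]_n) :
  \tr (X *t Y) = \tr X * \tr Y.
Proof. by rewrite /mxtrace mulr_sum; apply: eq_bigr => k _; rewrite mxE. Qed.

Lemma mxtrace_mul_delta (K : pzRingType) n (X : 'M[K]_n) (i j : 'I_n) :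
  \tr (X *m delta_mx i j) = X j i.
Proof.
have eX k : (X *m delta_mx i j) k k = (k == j)%:R * X k i.
  rewrite mxE (bigD1 i) //= big1 => [|l /negbTE nli]; rewrite !mxE ?nli ?mulr0 //.
  by rewrite eqxx addr0 mulr_natr mulr_natl.
rewrite /mxtrace (bigD1 j) //= big1 => [|k /negbTE nkj]; rewrite eX ?nkj ?mul0r //.
by rewrite eqxx mul1r addr0.
Qed.

Lemma mxtrace_delta (K : pzRingType) n (i j : 'I_n) :
  \tr (delta_mx i j : 'M[K]_n) = (i == j)%:R.
Proof. by rewrite -[delta_mx i j]mul1mx mxtrace_mul_delta mxE eq_sym. Qed.

Lemma mxtrace_ketbra_mul n (v : 'cV[C]_n) (M : 'M[C]_n) :
  \tr (ketbra v *m M) = qform M v.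
Proof. by rewrite /ketbra -mulmxA mxtrace_mulC /mxtrace big_ord1. Qed.

Section PartialTraces.
Variables d1 d2 : nat.

Fact ptrace2_is_linear : linear (@ptrace2 d1 d2).
Proof.
move=> c X Y; apply/matrixP => i j.
by rewrite !mxE mulr_sumr -big_split; apply: eq_bigr => k _; rewrite !mxE.
Qed.

HB.instance Definition _ :=
  GRing.isLinear.Build C 'M[C]_(d1 * d2) 'M[C]_d1 _ (@ptrace2 d1 d2) ptrace2_is_linear.

Fact ptrace1_is_linear : linear (@ptrace1 d1 d2).
Proof.
move=> c X Y; apply/matrixP => i j.
by rewrite !mxE mulr_sumr -big_split; apply: eq_bigr => k _; rewrite !mxE.
Qed.

HB.instance Definition _ :=
  GRing.isLinear.Build C 'M[C]_(d1 * d2) 'M[C]_d2 _ (@ptrace1 d1 d2) ptrace1_is_linear.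

Lemma ptrace2_tens (X : 'M[C]_d1) (Y : 'M[C]_d2) : ptrace2 (X *t Y) = \tr Y *: X.
Proof.
apply/matrixP => i j; rewrite !mxE /mxtrace mulr_suml.
by apply: eq_bigr => k _; rewrite tensmxE mulrC.
Qed.

Lemma ptrace1_tens (X : 'M[C]_d1) (Y : 'M[C]_d2) : ptrace1 (X *t Y) = \tr X *: Y.
Proof.
apply/matrixP => i j; rewrite !mxE /mxtrace mulr_suml.
by apply: eq_bigr => k _; rewrite tensmxE.
Qed.

Lemma mxtrace_ptrace2 (rho : 'M[C]_(d1 * d2)) : \tr (ptrace2 rho) = \tr rho.
Proof.
rewrite /mxtrace; under eq_bigr do rewrite mxE.
rewrite pair_big /= (reindex (@mxtens_unindex d1 d2)) /=.
  by apply: eq_bigr => k _; rewrite mxtens_unindexK.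
by exists (@mxtens_index d1 d2) => p _; rewrite (mxtens_indexK, mxtens_unindexK).
Qed.

End PartialTraces.

Section MaximallyEntangled.
Variable n : nat.

Definition bell_sum : 'M[C]_(n * n) :=
  \sum_(a < n) \sum_(b < n) (delta_mx a b *t delta_mx a b).

Definition max_mixed : 'M[C]_n := n%:R^-1 *: 1%:M.

Definition max_entangled : 'M[C]_(n * n) := n%:R^-1 *: bell_sum.

Lemma bell_sum_ketbra :
  bell_sum = ketbra (\sum_(a < n) ((delta_mx a 0 : 'cV[C]_n) *t (delta_mx a 0 : 'cV[C]_n))).
Proof.
rewrite /ketbra adjmx_sum mulmx_suml; apply: eq_bigr => a _.
rewrite mulmx_sumr; apply: eq_bigr => b _.
by rewrite adjmx_tens !adjmx_delta tensmx_mul mul_delta_mx.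
Qed.

Lemma sum_delta_tr_scale {V : lmodType C} (F : 'I_n -> 'I_n -> V) :
  \sum_(a < n) \sum_(b < n) \tr (delta_mx a b : 'M[C]_n) *: F a b = \sum_(a < n) F a a.
Proof.
apply: eq_bigr => a _; rewrite (bigD1 a) //= big1 => [|b nba].
  by rewrite mxtrace_delta eqxx scale1r addr0.
by rewrite mxtrace_delta eq_sym (negbTE nba) scale0r.
Qed.

Lemma ptrace2_bell_sum : ptrace2 bell_sum = 1%:M.
Proof.
rewrite linear_sum mx1_sum_delta -(sum_delta_tr_scale (fun a b => delta_mx a b : 'M[C]_n)).
by apply: eq_bigr => a _; rewrite linear_sum; apply: eq_bigr => b _; exact: ptrace2_tens.
Qed.

Lemma ptrace1_bell_sum : ptrace1 bell_sum = 1%:M.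
Proof.
rewrite linear_sum mx1_sum_delta -(sum_delta_tr_scale (fun a b => delta_mx a b : 'M[C]_n)).
by apply: eq_bigr => a _; rewrite linear_sum; apply: eq_bigr => b _; exact: ptrace1_tens.
Qed.

Lemma mxtrace_bell_sum : \tr bell_sum = n%:R.
Proof. by rewrite -mxtrace_ptrace2 ptrace2_bell_sum mxtrace1. Qed.

Lemma mxtrace_tens_mul_bell_sum (X Y : 'M[C]_n) :
  \tr ((X *t Y) *m bell_sum) = \tr (X^T *m Y).
Proof.
rewrite mulmx_sumr raddf_sum /mxtrace; apply: eq_bigr => a _.
rewrite mulmx_sumr raddf_sum mxE; apply: eq_bigr => b _.
by rewrite /= tensmx_mul mxtrace_tens !mxtrace_mul_delta mxE.
Qed.

Lemma max_mixed_state : (0 < n)%N -> is_state max_mixed.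
Proof.
move=> n_gt0; split; last by rewrite mxtraceZ mxtrace1 mulVf // pnatr_eq0 -lt0n.
rewrite /max_mixed; have -> : 1%:M = ketbra (1%:M : 'M[C]_n) by rewrite /ketbra adjmx1 mul1mx.
by apply: positiveZ; [rewrite invr_ge0 ler0n | exact: positive_ketbra].
Qed.

Lemma max_entangled_state : (0 < n)%N -> is_state max_entangled.
Proof.
move=> n_gt0; split; last first.
  by rewrite mxtraceZ mxtrace_bell_sum mulVf // pnatr_eq0 -lt0n.
rewrite /max_entangled bell_sum_ketbra.
by apply: positiveZ; [rewrite invr_ge0 ler0n | exact: positive_ketbra].
Qed.

Lemma ptrace2_max_entangled : ptrace2 max_entangled = max_mixed.
Proof. by rewrite linearZ /= ptrace2_bell_sum. Qed.

Lemma ptrace1_max_entangled : ptrace1 max_entangled = max_mixed.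
Proof. by rewrite linearZ /= ptrace1_bell_sum. Qed.

End MaximallyEntangled.

Lemma sum_ord2 (V : nmodType) (F : 'I_2 -> V) : \sum_i F i = F ord0 + F ord_max.
Proof. by rewrite big_ord_recr big_ord1; congr (F _ + _); apply: val_inj. Qed.

Definition rvec (p : R * R) : 'cV[C]_2 := \col_i (if i == ord0 then p.1 else p.2)%:C.

Lemma qform_rvec (M : 'M[C]_2) (p : R * R) :
  qform M (rvec p) = (p.1 * p.1)%:C * M ord0 ord0
    + (p.1 * p.2)%:C * (M ord0 ord_max + M ord_max ord0) + (p.2 * p.2)%:C * M ord_max ord_max.
Proof.
rewrite /qform /adjmx !mxE !sum_ord2 !mxE !sum_ord2 !mxE /= !conjC_realC !rmorphM.
by ring.
Qed.

Lemma qform_rvec_real {M : 'M[C]_2} {a b g : R} :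
  M ord0 ord0 = a%:C -> M ord_max ord_max = b%:C ->
  M ord0 ord_max + M ord_max ord0 = g%:C ->
  forall p, qform M (rvec p) = (binary_form a b g p)%:C.
Proof. by move=> Ma Mb Mg p; rewrite qform_rvec Ma Mb Mg -!rmorphM -!rmorphD. Qed.

Lemma positive2P (P : 'M[C]_2) : is_positive P ->
  exists a b g : R, [/\ P ord0 ord0 = a%:C, P ord_max ord_max = b%:C,
    P ord0 ord_max + P ord_max ord0 = g%:C & forall p, 0 <= binary_form a b g p].
Proof.
move=> P_pos; have q s t : 0 <= qform P (rvec (s, t)) := P_pos (rvec (s, t)).
have := q 1 0; rewrite qform_rvec /= !(mulr0, mul0r, mulr1, rmorph0, rmorph1, addr0, mul1r).
move=> /ger0_real/complex_realP [a Pa].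
have := q 0 1; rewrite qform_rvec /= !(mulr0, mul0r, mulr1, rmorph0, rmorph1, add0r, mul1r).
move=> /ger0_real/complex_realP [b Pb].
have /complex_realP [g Pg] : P ord0 ord_max + P ord_max ord0 \is Num.real.
  have := q 1 1; rewrite qform_rvec /= !(mulr1, rmorph1, mul1r) Pa Pb => /ger0_real.
  by rewrite (rpredDr _ (realC b)) (rpredDl _ (realC a)).
exists a, b, g; split=> // p.
by have := P_pos (rvec p); rewrite -/(qform _ _) (qform_rvec_real Pa Pb Pg) ler0c.
Qed.

Lemma mxtrace_ketbra_rvec (p q : R * R) :
  \tr ((ketbra (rvec p))^T *m ketbra (rvec q)) = ((p.1 * q.1 + p.2 * q.2) ^+ 2)%:C.
Proof.
rewrite /mxtrace /ketbra /adjmx !sum_ord2 !mxE !sum_ord2 !mxE !big_ord1 !mxE /=.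
by rewrite !conjC_realC !(rmorphXn, rmorphD, rmorphM); ring.
Qed.

Definition witness_u (m : 'I_4) : R * R :=
  match val m with 0 => (2, 0) | 1 => (0, 2) | 2 => (1, 1) | _ => (1, -1) end.

Definition witness_w (m : 'I_4) : R * R :=
  match val m with 0 => (1, 0) | 1 => (0, 1) | 2 => (1, 1) | _ => (1, -1) end.

Definition witness_obs : 'M[C]_(2 * 2) :=
  \sum_(m < 4) (ketbra (rvec (witness_u m)) *t ketbra (rvec (witness_w m))).

Lemma witness_obs_observable : is_observable witness_obs.
Proof.
rewrite /is_observable adjmx_sum; apply: eq_bigr => m _.
by rewrite adjmx_tens !adjmx_ketbra.
Qed.

Lemma witness_obs_separable : is_separable witness_obs.
Proof.
split; first by apply: positive_sum => m; rewrite ketbra_tens; exact: positive_ketbra.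
exists 4%N, (fun m => ketbra (rvec (witness_u m))), (fun m => ketbra (rvec (witness_w m))).
by split=> // m; split; exact: positive_ketbra.
Qed.

Lemma witness_obs_max_entangled : \tr (witness_obs *m max_entangled 2) = 8.
Proof.
rewrite /max_entangled -scalemxAr mxtraceZ.
have -> : \tr (witness_obs *m bell_sum 2) = (\sum_(m < 4)
    ((witness_u m).1 * (witness_w m).1 + (witness_u m).2 * (witness_w m).2) ^+ 2)%:C.
  rewrite rmorph_sum mulmx_suml raddf_sum; apply: eq_bigr => m _.
  by rewrite /= mxtrace_tens_mul_bell_sum mxtrace_ketbra_rvec.
rewrite !big_ord_recl big_ord0 /=.
by rewrite !(rmorphXn, rmorphD, rmorphM, rmorphN, rmorph0, rmorph1, rmorph_nat); field.
Qed.

Lemma witness_obs_tens_bound (P Q : 'M[C]_2) : is_positive P -> is_positive Q ->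
  \tr (witness_obs *m (P *t Q)) <= 6 * \tr (P *t Q).
Proof.
move=> /positive2P [a [b [g [Pa Pb Pg /binary_form_ge0_discr [a_ge0 b_ge0 discrP]]]]].
move=> /positive2P [a' [b' [g' [Qa Qb Qg /binary_form_ge0_discr [a'_ge0 b'_ge0 discrQ]]]]].
have -> : \tr (witness_obs *m (P *t Q)) = (\sum_(m < 4)
    binary_form a b g (witness_u m) * binary_form a' b' g' (witness_w m))%:C.
  rewrite rmorph_sum mulmx_suml raddf_sum; apply: eq_bigr => m _.
  rewrite /= tensmx_mul mxtrace_tens !mxtrace_ketbra_mul rmorphM.
  by rewrite (qform_rvec_real Pa Pb Pg) (qform_rvec_real Qa Qb Qg).
have -> : 6 * \tr (P *t Q) = (6 * ((a + b) * (a' + b')))%:C.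
  by rewrite mxtrace_tens /mxtrace !sum_ord2 Pa Pb Qa Qb !(rmorphD, rmorphM, rmorph_nat).
rewrite lecR !big_ord_recl big_ord0 /binary_form /=.
have := discr_mul_le a_ge0 b_ge0 a'_ge0 b'_ge0 discrP discrQ; lra.
Qed.

Lemma witness_obs_separable_bound (sigma : 'M[C]_(2 * 2)) :
  is_separable sigma -> \tr (witness_obs *m sigma) <= 6 * \tr sigma.
Proof.
case=> _ [k [f1 [f2 [f_pos ->]]]].
rewrite mulmx_sumr !raddf_sum mulr_sumr /=; apply: ler_sum => m _.
by case: (f_pos m) => P_pos Q_pos; exact: witness_obs_tens_bound.
Qed.

Lemma witness_obs_separable_state_lt (sigma : 'M[C]_(2 * 2)) :
  is_state sigma -> is_separable sigma -> \tr (witness_obs *m sigma) < 8.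
Proof.
move=> [_ tr1] /witness_obs_separable_bound; rewrite tr1 mulr1 => /le_lt_trans; apply.
by rewrite ltr_nat.
Qed.

Theorem proposition3p10 :
  exists (d1 d2 : nat) (rho1 : 'M[C]_d1) (rho2 : 'M[C]_d2)
         (A : 'M[C]_(d1 * d2)) (rho : 'M[C]_(d1 * d2)) (lam : Rdefinitions.R),
    is_state rho1 /\ is_state rho2 /\
    is_observable A /\ is_separable A /\
    is_state rho /\ is_entangled rho /\
    0 < lam /\
    lifting_witness lam rho1 A rho2 rho /\
    (forall sigma : 'M[C]_(d1 * d2),
        is_state sigma -> is_separable sigma ->
        ~ lifting_witness lam rho1 A rho2 sigma).
Proof.
have rho1_state : is_state (max_mixed 2) by exact: max_mixed_state.
have rho_state : is_state (max_entangled 2) by exact: max_entangled_state.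
have rho_entangled : ~ is_separable (max_entangled 2).
  move=> /(witness_obs_separable_state_lt _ rho_state).
  by rewrite witness_obs_max_entangled ltxx.
have lam8 : RtoC 8 = 8 by rewrite RtoCE rmorph_nat.
exists 2%N, 2%N, (max_mixed 2), (max_mixed 2), witness_obs, (max_entangled 2), 8.
split=> //; split=> //.
split; first exact: witness_obs_observable.
split; first exact: witness_obs_separable.
split=> //; split; first by case: rho_state.
split; first by rewrite ltr0n.
split.
  split; last by rewrite lam8 witness_obs_max_entangled.
  by split; [exact: state_pdo | rewrite ptrace2_max_entangled ptrace1_max_entangled].
move=> sigma sigma_state sigma_sep [_]; rewrite lam8 => le8.
have := witness_obs_separable_state_lt _ sigma_state sigma_sep.
by move=> /lt_le_trans/(_ le8); rewrite ltxx.
Qed.
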